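(* Let $n=n_1+\dots+n_k$ be a partition into positive integers, let $L=U(n_1)\times\cdots\times U(n_k)$ be the natural block-diagonal subgroup of $G=U(n)$, and let $G'=O(n)$. Let $J=\mathrm{diag}(J_1,\dots,J_k)\in M(n,\mathbb{R})$ be block diagonal with $J_i\in M(n_i,\mathbb{R})$, and let $G_J:=\{g\in G:gJ=Jg\}$. Suppose there exist a skew-Hermitian matrix $X\in\mathfrak{u}(n)$ and a sequence $i_0,i_1,\dots,i_l\in\{1,\dots,k\}$ ($l\ge 2$) with $i_0=i_l$ and $i_{a-1}\ne i_a$ ($a=1,\dots,l$) such that $\det(\lambda I_{n_{i_0}}-A_{i_0\cdots i_l}([X,J]))\notin\mathbb{R}[\lambda]$. Then the multiplication map $L\times G'\times G_J\to G$ is not surjective.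
   Context: For $P\in M(n,\mathbb{C})$ written in block form $P=(P_{ij})_{1\le i,j\le k}$ with $P_{ij}\in M(n_i,n_j;\mathbb{C})$, set $\widetilde P_{ij}:=P_{ij}$ if $i<j$ and $\widetilde P_{ij}:=P_{ji}^*$ (conjugate transpose) if $i>j$, and $A_{i_0\cdots i_l}(P):=\widetilde P_{i_0i_1}\widetilde P_{i_1i_2}\cdots\widetilde P_{i_{l-1}i_l}\in M(n_{i_0},\mathbb{C})$. $[X,J]=XJ-JX$; $I_m$ is the identity matrix. *)

From HB Require Import structures.
From mathcomp Require Import all_boot all_order all_algebra.
From mathcomp Require Import complex.
From mathcomp Require Import reals.
Set Implicit Arguments. Unset Strict Implicit. Unset Printing Implicit Defensive.
Import Order.TTheory GRing.Theory Num.Theory.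
Local Open Scope ring_scope.

(* Complex numbers are R[i] for R : realType (any realType is isomorphic to the reals). *)

Definition ctmx (C : numClosedFieldType) (m n : nat) (A : 'M[C]_(m, n)) : 'M[C]_(n, m) :=
  map_mx Num.conj (A^T).

Definition unitary_mx (C : numClosedFieldType) (n : nat) (g : 'M[C]_n) : Prop :=
  g *m ctmx g = 1%:M.

Definition skew_hermitian (C : numClosedFieldType) (n : nat) (X : 'M[C]_n) : Prop :=
  ctmx X = - X.

Definition commmx (C : pzRingType) (n : nat) (X J : 'M[C]_n) : 'M[C]_n :=
  X *m J - J *m X.

Section Blocks.
Variables (C : numClosedFieldType) (k : nat) (ns : 'I_k -> nat).
Local Notation N := (\sum_(i < k) ns i)%N.

(* \tilde P_{ij} : P_{ij} if i < j, (P_{ji})^* if i > j (and P_{ii} when i = j, unused) *)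
Definition Ptilde (P : 'M[C]_N) (i j : 'I_k) : 'M[C]_(ns i, ns j) :=
  if (j < i)%N then ctmx (submxblock P j i) else submxblock P i j.

Fixpoint Aprod (P : 'M[C]_N) (i : 'I_k) (s : seq 'I_k) : 'M[C]_(ns i, ns (last i s)) :=
  match s with
  | [::] => 1%:M
  | j :: s' => Ptilde P i j *m Aprod P j s'
  end.

(* A_{i0 i1 ... i(l-1) i0}(P) for the closed sequence i0, s, i0 (with s = i1..i(l-1)) *)
Definition Acyc (P : 'M[C]_N) (i0 : 'I_k) (s : seq 'I_k) : 'M[C]_(ns i0) :=
  Aprod P i0 s *m Ptilde P (last i0 s) i0.

End Blocks.

From HB Require Import structures.
From mathcomp Require Import all_boot all_order all_algebra.
From mathcomp Require Import complex.
From mathcomp Require Import reals.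
From mathcomp Require Import ring.
Set Implicit Arguments. Unset Strict Implicit. Unset Printing Implicit Defensive.
Import Order.TTheory GRing.Theory Num.Theory.
Local Open Scope ring_scope.

(* If the product map were onto, every Cayley transform
   g = (1 + tX)(1 - tX)^-1 with t real would factor as l o h.  Since h is
   unitary and commutes with J, g J g^* = l (o J o^T) l^*, and conjugating by
   the block-diagonal unitary l conjugates every cyclic block product A, so
   char_poly (A (g J g^* )) has real coefficients.  Clearing denominators,
   g J g^* becomes a polynomial matrix N(t) with N(0) = J block diagonal and
   N'(0) = 2[X,J] + cJ; hence the off-diagonal blocks of N(t) are t K(t) with
   K(0) = 2[X,J] off the diagonal, and A (N(t)) = t^l A (K(t)).  The
   coefficients of char_poly (A (K(t))) are thus polynomials in t that are
   real at all but finitely many natural numbers t, hence real at t = 0, where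
   they are those of char_poly (2^l A ([X,J])). *)

Section BlockDiagonal.
Variables (k : nat) (ns : 'I_k -> nat).
Local Notation N := (\sum_(i < k) ns i)%N.

Definition blockdiag_mx (V : nmodType) (A : 'M[V]_N) : Prop :=
  forall i j, i != j -> submxblock A i j = 0.

Lemma blockdiag_mxdiag (V : nmodType) (B : forall i, 'M[V]_(ns i)) :
  blockdiag_mx (\mxdiag_i B i).
Proof. by move=> i j /negbTE ij; rewrite mxblockK ij. Qed.

Lemma submxblock_map (U V : Type) (f : U -> V) (A : 'M[U]_N) i j :
  submxblock (map_mx f A) i j = map_mx f (submxblock A i j).
Proof. by apply/matrixP => a b; rewrite !mxE. Qed.

Lemma blockdiag_map_mx (U V : nmodType) (f : {additive U -> V}) (A : 'M[U]_N) :
  blockdiag_mx A -> blockdiag_mx (map_mx f A).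
Proof. by move=> Ad i j ij; rewrite submxblock_map Ad // map_mx0. Qed.

Variable T : pzRingType.

Lemma submxblockM (A B : 'M[T]_N) i j :
  submxblock (A *m B) i j = \sum_l submxblock A i l *m submxblock B l j.
Proof.
have := mul_mxblock (submxblock A) (submxblock B).
by rewrite !submxblockK => ->; rewrite mxblockK.
Qed.

Lemma submxblockZ (c : T) (A : 'M[T]_N) i j :
  submxblock (c *: A) i j = c *: submxblock A i j.
Proof. by apply/matrixP => a b; rewrite !mxE. Qed.

Lemma submxblock1 i : submxblock (1%:M : 'M[T]_N) i i = 1%:M.
Proof. by rewrite -(mxdiagZ (p_ := ns) 1) submxblock_diag. Qed.

Lemma submxblock_blockdiagMl (D A : 'M[T]_N) i j : blockdiag_mx D ->
  submxblock (D *m A) i j = submxblock D i i *m submxblock A i j.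
Proof.
move=> Dd; rewrite submxblockM (bigD1 i) //= big1 ?addr0 // => l li.
by rewrite Dd 1?eq_sym // mul0mx.
Qed.

Lemma submxblock_blockdiagMr (A D : 'M[T]_N) i j : blockdiag_mx D ->
  submxblock (A *m D) i j = submxblock A i j *m submxblock D j j.
Proof.
move=> Dd; rewrite submxblockM (bigD1 j) //= big1 ?addr0 // => l lj.
by rewrite Dd // mulmx0.
Qed.

End BlockDiagonal.

Section ConjugateTranspose.
Variable C : numClosedFieldType.

Lemma ctmxM m n p (A : 'M[C]_(m, n)) (B : 'M[C]_(n, p)) :
  ctmx (A *m B) = ctmx B *m ctmx A.
Proof. by rewrite /ctmx trmx_mul map_mxM. Qed.

Lemma ctmxK m n (A : 'M[C]_(m, n)) : ctmx (ctmx A) = A.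
Proof. by apply/matrixP => a b; rewrite !mxE conjCK. Qed.

Lemma ctmx0 m n : ctmx (0 : 'M[C]_(m, n)) = 0.
Proof. by rewrite /ctmx trmx0 map_mx0. Qed.

Lemma ctmx_real m n (A : 'M[C]_(m, n)) :
  A \is a mxOver Num.real -> ctmx A \is a mxOver Num.real.
Proof. by move=> /mxOverP Ar; apply/mxOverP => a b; rewrite !mxE conj_Creal. Qed.

Variables (k : nat) (ns : 'I_k -> nat).
Local Notation N := (\sum_(i < k) ns i)%N.

Lemma submxblock_ctmx (A : 'M[C]_N) i j :
  submxblock (ctmx A) i j = ctmx (submxblock A j i).
Proof. by apply/matrixP => a b; rewrite !mxE. Qed.

Lemma blockdiag_ctmx (A : 'M[C]_N) : blockdiag_mx A -> blockdiag_mx (ctmx A).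
Proof. by move=> Ad i j ij; rewrite submxblock_ctmx Ad 1?eq_sym // ctmx0. Qed.

Lemma blockdiag_unitary_block (l : 'M[C]_N) i :
  unitary_mx l -> blockdiag_mx l -> unitary_mx (submxblock l i i).
Proof.
move=> lu ld; rewrite /unitary_mx -submxblock_ctmx -submxblock_blockdiagMl //.
by rewrite lu submxblock1.
Qed.

End ConjugateTranspose.

(* [Ptilde], [Aprod], [Acyc] with the entrywise conjugation replaced by an
   arbitrary map [f], so that they also make sense for polynomial matrices. *)
Section TwistedCycles.
Variables (T : pzRingType) (f : T -> T) (k : nat) (ns : 'I_k -> nat).
Local Notation N := (\sum_(i < k) ns i)%N.

Definition Ptilde_with (P : 'M[T]_N) (i j : 'I_k) : 'M[T]_(ns i, ns j) :=
  if (j < i)%N then map_mx f (submxblock P j i)^T else submxblock P i j.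

Fixpoint Aprod_with (P : 'M[T]_N) (i : 'I_k) (s : seq 'I_k) :
    'M[T]_(ns i, ns (last i s)) :=
  if s is j :: s' then Ptilde_with P i j *m Aprod_with P j s' else 1%:M.

Definition Acyc_with (P : 'M[T]_N) (i0 : 'I_k) (s : seq 'I_k) : 'M[T]_(ns i0) :=
  Aprod_with P i0 s *m Ptilde_with P (last i0 s) i0.

End TwistedCycles.

Lemma Acyc_withE (C : numClosedFieldType) k (ns : 'I_k -> nat)
    (P : 'M[C]_(\sum_(i < k) ns i)) i0 s :
  Acyc P i0 s = Acyc_with Num.conj P i0 s.
Proof. by []. Qed.

Lemma map_Acyc_with (T U : pzRingType) (phi : {rmorphism T -> U})
    (f : T -> T) (g : U -> U) k (ns : 'I_k -> nat)
    (P : 'M[T]_(\sum_(i < k) ns i)) i0 s :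
  (forall x, phi (f x) = g (phi x)) ->
  map_mx phi (Acyc_with f P i0 s) = Acyc_with g (map_mx phi P) i0 s.
Proof.
move=> phifg; have map_Ptilde i j :
    map_mx phi (Ptilde_with f P i j) = Ptilde_with g (map_mx phi P) i j.
  by rewrite /Ptilde_with; case: ifP => _; apply/matrixP => a b; rewrite !mxE ?phifg.
rewrite /Acyc_with map_mxM map_Ptilde; congr (_ *m _).
by elim: s i0 => [|j s IHs] i /=; rewrite ?map_mx1 // map_mxM map_Ptilde IHs.
Qed.

Section ScaleOffDiagonal.
Variables (T : comPzRingType) (f : {rmorphism T -> T}) (k : nat) (ns : 'I_k -> nat).
Local Notation N := (\sum_(i < k) ns i)%N.
Variables (c : T) (P P' : 'M[T]_N).
Hypotheses (fc : f c = c)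
  (PP' : forall i j, i != j -> submxblock P i j = c *: submxblock P' i j).

Lemma Ptilde_with_scale i j : i != j -> Ptilde_with f P i j = c *: Ptilde_with f P' i j.
Proof.
move=> ij; rewrite /Ptilde_with; case: ifP => _; last by rewrite PP'.
by rewrite PP' 1?eq_sym //; apply/matrixP => a b; rewrite !mxE rmorphM fc.
Qed.

Lemma Aprod_with_scale i s : path (fun a b => a != b) i s ->
  Aprod_with f P i s = c ^+ size s *: Aprod_with f P' i s.
Proof.
elim: s i => [|j s IHs] i /=; first by rewrite scale1r.
case/andP=> ij /IHs ->; rewrite Ptilde_with_scale // -scalemxAl -scalemxAr.
by rewrite scalerA exprS.
Qed.

Lemma Acyc_with_scale i0 s : path (fun a b => a != b) i0 (rcons s i0) ->
  Acyc_with f P i0 s = c ^+ (size s).+1 *: Acyc_with f P' i0 s.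
Proof.
rewrite rcons_path => /andP[ps last_i0].
rewrite /Acyc_with Aprod_with_scale // Ptilde_with_scale // -scalemxAl -scalemxAr.
by rewrite scalerA exprSr.
Qed.

End ScaleOffDiagonal.

Section BlockDiagonalConjugation.
Variables (C : numClosedFieldType) (k : nat) (ns : 'I_k -> nat).
Local Notation N := (\sum_(i < k) ns i)%N.
Variables (l : 'M[C]_N).
Hypotheses (lu : unitary_mx l) (ld : blockdiag_mx l).
Local Notation d i := (submxblock l i i).

Lemma blockdiag_unitary_blockV i : ctmx (d i) *m d i = 1%:M.
Proof. exact/mulmx1C/blockdiag_unitary_block. Qed.

Lemma submxblock_conj (Q : 'M[C]_N) i j :
  submxblock (l *m Q *m ctmx l) i j = d i *m submxblock Q i j *m ctmx (d j).
Proof.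
rewrite submxblock_blockdiagMr; last exact: blockdiag_ctmx.
by rewrite submxblock_blockdiagMl // submxblock_ctmx.
Qed.

Lemma Ptilde_conj (Q : 'M[C]_N) i j :
  Ptilde (l *m Q *m ctmx l) i j = d i *m Ptilde Q i j *m ctmx (d j).
Proof.
rewrite /Ptilde; case: ifP => _; rewrite submxblock_conj //.
by rewrite !ctmxM ctmxK mulmxA.
Qed.

Lemma Aprod_conj (Q : 'M[C]_N) i s :
  Aprod (l *m Q *m ctmx l) i s = d i *m Aprod Q i s *m ctmx (d (last i s)).
Proof.
elim: s i => [|j s IHs] i /=; first by rewrite mulmx1 blockdiag_unitary_block.
rewrite IHs Ptilde_conj !mulmxA; congr (_ *m _).
by rewrite -!mulmxA (mulmxA (ctmx (d j))) blockdiag_unitary_blockV mul1mx.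
Qed.

Lemma Acyc_conj (Q : 'M[C]_N) i s :
  Acyc (l *m Q *m ctmx l) i s = d i *m Acyc Q i s *m ctmx (d i).
Proof.
rewrite /Acyc Aprod_conj Ptilde_conj !mulmxA; congr (_ *m _).
by rewrite -!mulmxA (mulmxA (ctmx _)) blockdiag_unitary_blockV mul1mx.
Qed.

End BlockDiagonalConjugation.

Lemma Acyc_real (C : numClosedFieldType) k (ns : 'I_k -> nat)
    (Q : 'M[C]_(\sum_(i < k) ns i)) i0 s :
  Q \is a mxOver Num.real -> Acyc Q i0 s \is a mxOver Num.real.
Proof.
move=> /mxOverP Qr; have Ptilde_real i j : Ptilde Q i j \is a mxOver Num.real.
  by apply/mxOverP => a b; rewrite /Ptilde; case: ifP => _; rewrite !mxE ?conj_Creal.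
rewrite /Acyc mxOverM //; elim: s i0 => [|j s IHs] i /=.
  by rewrite mxOver_scalar ?rpred0 ?rpred1.
by rewrite mxOverM.
Qed.

Lemma char_polyJ (T : comNzRingType) m (U V M : 'M[T]_m) :
  V *m U = 1%:M -> char_poly (U *m M *m V) = char_poly M.
Proof.
move=> VU; have UV := mulmx1C VU; rewrite /char_poly.
have -> : char_poly_mx (U *m M *m V) =
    map_mx polyC U *m char_poly_mx M *m map_mx polyC V.
  rewrite /char_poly_mx mulmxBr mulmxBl -!map_mxM; congr (_ - _).
  by rewrite scalar_mxC -mulmxA -map_mxM UV map_mx1 mulmx1.
rewrite !det_mulmx mulrC mulrA -det_mulmx -map_mxM VU map_mx1 det1.
by rewrite mul1r.
Qed.

Lemma char_polyZ (F : fieldType) m (M : 'M[F]_m) c : c != 0 ->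
  char_poly (c *: M) = (c ^+ m)%:P * (char_poly M \Po (c^-1 *: 'X)).
Proof.
move=> c0; rewrite /char_poly -det_map_mx rmorphXn -detZ; congr (\det _).
apply/matrixP => a b; rewrite !mxE /= rmorphB rmorphMn /= comp_polyX comp_polyC.
by rewrite mulrBr mulrnAr mul_polyC scalerA mulfV // scale1r polyCM.
Qed.

Lemma char_polyZ_real (C : numFieldType) m (M : 'M[C]_m) c :
  c \is Num.real -> c != 0 ->
  (char_poly (c *: M) \is a polyOver Num.real) = (char_poly M \is a polyOver Num.real).
Proof.
have char_polyZ_realW (d : C) (A : 'M[C]_m) : d \is Num.real -> d != 0 ->
    char_poly A \is a polyOver Num.real -> char_poly (d *: A) \is a polyOver Num.real.
  move=> dr d0 Ar; rewrite char_polyZ //.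
  apply: polyOver_mulr_2closed; first by rewrite polyOverC rpredX.
  by rewrite polyOver_comp ?polyOverZ ?polyOverX ?rpredV.
move=> cr c0; apply/idP/idP; last exact: char_polyZ_realW.
by rewrite -{2}(scalerK c0 M); apply: char_polyZ_realW; rewrite ?rpredV ?invr_eq0.
Qed.

Lemma char_poly_real (C : numClosedFieldType) m (M : 'M[C]_m) :
  M \is a mxOver Num.real -> char_poly M \is a polyOver Num.real.
Proof.
move=> /mxOverP Mr; have MJ : map_mx Num.conj M = M.
  by apply/matrixP => a b; rewrite mxE conj_Creal.
by apply/polyOverP => j; rewrite CrealE -coef_map map_char_poly MJ.
Qed.

Lemma poly_nat_nonroot (C : numDomainType) (p : {poly C}) :
  p != 0 -> exists n : nat, ~~ root p n%:R.
Proof.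
move=> p0; have : ~~ all (root p) [seq i%:R | i <- iota 0 (size p)].
  apply: contra p0 => allr; apply/eqP/(roots_geq_poly_eq0 allr).
    by rewrite map_inj_uniq ?iota_uniq // => i j /eqP; rewrite eqr_nat => /eqP.
  by rewrite size_map size_iota.
by case/allPn => _ /mapP[n _ ->]; exists n.
Qed.

Lemma real_horner0 (C : numClosedFieldType) (r q : {poly C}) : q != 0 ->
  (forall n : nat, q.[n%:R] != 0 -> r.[n%:R] \is Num.real) -> r.[0] \is Num.real.
Proof.
move=> q0 r_nat; apply: contraT => r0_nreal.
pose rho := map_poly Num.conj r - r.
have rhoE (x : C) : x \is Num.real -> rho.[x] = r.[x]^* - r.[x].
  by move=> xr; rewrite hornerD hornerN -{1}(conj_Creal xr) horner_map.
have rho0 : rho != 0.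
  by apply: contraNneq r0_nreal => rho0; rewrite CrealE -subr_eq0 -rhoE // rho0 horner0.
have [n] := poly_nat_nonroot (mulf_neq0 q0 rho0).
rewrite rootE hornerM mulf_eq0 negb_or => /andP[qn].
by rewrite rhoE ?realn // subr_eq0 -CrealE r_nat.
Qed.

Lemma polyOver_real_horner0 (C : numClosedFieldType) (Q : {poly {poly C}})
    (q : {poly C}) : q != 0 ->
  (forall n : nat, q.[n%:R] != 0 ->
     map_poly (horner_eval n%:R) Q \is a polyOver Num.real) ->
  map_poly (horner_eval 0) Q \is a polyOver Num.real.
Proof.
move=> q0 Q_nat; apply/polyOverP => j; rewrite coef_map /= horner_evalE.
apply: (real_horner0 q0) => n /Q_nat/polyOverP/(_ j).
by rewrite coef_map /= horner_evalE.
Qed.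

Section RealCharPolyOfCycles.
Variables (C : numClosedFieldType) (k : nat) (ns : 'I_k -> nat).
Local Notation N := (\sum_(i < k) ns i)%N.
Variables (i0 : 'I_k) (s : seq 'I_k).

Lemma char_poly_Acyc_conj_real (l Q : 'M[C]_N) :
  unitary_mx l -> blockdiag_mx l -> Q \is a mxOver Num.real ->
  char_poly (Acyc (l *m Q *m ctmx l) i0 s) \is a polyOver Num.real.
Proof.
move=> lu ld Qr; rewrite Acyc_conj // char_polyJ; last exact: blockdiag_unitary_blockV.
exact/char_poly_real/Acyc_real.
Qed.

Lemma char_poly_Acyc_scale_real (c : C) (P P' : 'M[C]_N) :
  c \is Num.real -> c != 0 -> path (fun a b => a != b) i0 (rcons s i0) ->
  (forall i j, i != j -> submxblock P i j = c *: submxblock P' i j) ->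
  (char_poly (Acyc P i0 s) \is a polyOver Num.real)
    = (char_poly (Acyc P' i0 s) \is a polyOver Num.real).
Proof.
move=> cr c0 cycle PP'.
rewrite !Acyc_withE (Acyc_with_scale (f := Num.conj) _ PP') //; last exact: conj_Creal.
by rewrite char_polyZ_real ?rpredX ?expf_neq0.
Qed.

Lemma horner_char_poly_Acyc_with (K : 'M[{poly C}]_N) (t : C) : t \is Num.real ->
  map_poly (horner_eval t) (char_poly (Acyc_with (map_poly Num.conj) K i0 s))
    = char_poly (Acyc (map_mx (horner_eval t) K) i0 s).
Proof.
move=> tr; rewrite map_char_poly Acyc_withE (map_Acyc_with (g := Num.conj)) // => p.
by rewrite /= !horner_evalE -{1}(conj_Creal tr) horner_map.
Qed.

End RealCharPolyOfCycles.

Section CayleyNumerator.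
Variables (C : comNzRingType) (n : nat).
Local Notation ev t := (map_mx (horner_eval t)).
Local Notation coef1mx := (map_mx (coefp 1)).

Lemma horner_polyC_mx t m p (A : 'M[C]_(m, p)) : ev t (map_mx polyC A) = A.
Proof. by apply/matrixP => a b; rewrite !mxE /= horner_evalE hornerC. Qed.

Lemma horner_scaleX_mx t m p (A : 'M[{poly C}]_(m, p)) : ev t ('X *: A) = t *: ev t A.
Proof. by apply/matrixP => a b; rewrite !mxE /= !horner_evalE hornerM hornerX. Qed.

Lemma horner0_coef0_mx m p (A : 'M[{poly C}]_(m, p)) : ev 0 A = map_mx (coefp 0) A.
Proof. by apply/matrixP => a b; rewrite !mxE /= horner_evalE horner_coef0. Qed.

Lemma coef1_mulmx m p q (A : 'M[{poly C}]_(m, p)) (B : 'M_(p, q)) :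
  coef1mx (A *m B) = ev 0 A *m coef1mx B + coef1mx A *m ev 0 B.
Proof.
rewrite !horner0_coef0_mx; apply/matrixP => a b; rewrite !mxE /= coef_sum -big_split.
by apply: eq_bigr => c _; rewrite coefM big_ord_recr big_ord1 /= !mxE.
Qed.

Lemma coef1_scalar_mx (x : {poly C}) : coef1mx (x%:M : 'M_n) = (x`_1)%:M.
Proof. by apply/matrixP => a b; rewrite !mxE /= coefMn. Qed.

Lemma coef1_adj (M : 'M[{poly C}]_n) :
  ev 0 M = 1%:M -> coef1mx (\adj M) = ((\det M)`_1)%:M - coef1mx M.
Proof.
move=> M0; have := congr1 (fun A => coef1mx A) (mul_mx_adj M).
rewrite /= coef1_mulmx coef1_scalar_mx map_mx_adj M0 adj1 mul1mx mulmx1 => <-.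
by rewrite addrK.
Qed.

Definition pencil (B : 'M[C]_n) : 'M[{poly C}]_n := 1%:M + 'X *: map_mx polyC B.

Lemma horner_pencil t B : ev t (pencil B) = 1%:M + t *: B.
Proof.
by apply/matrixP => a b; rewrite !mxE /= horner_evalE -polyC_natr !hornerE mulrC.
Qed.

Lemma coef1_pencil B : coef1mx (pencil B) = B.
Proof.
apply/matrixP => a b; rewrite !mxE /= coefD coefMn coef1 mul0rn add0r.
by rewrite coefXM coefC.
Qed.

Lemma horner0_pencil B : ev 0 (pencil B) = 1%:M.
Proof. by rewrite horner_pencil scale0r addr0. Qed.

Lemma horner_det_pencil t B : (\det (pencil B)).[t] = \det (1%:M + t *: B).
Proof. by rewrite -horner_evalE -det_map_mx horner_pencil. Qed.

Lemma det_pencil_neq0 B : \det (pencil B) != 0.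
Proof.
apply: contra_neq (@oner_neq0 C) => d0.
by have := horner_det_pencil 0 B; rewrite scale0r addr0 det1 d0 horner0 => ->.
Qed.

Variables (X J : 'M[C]_n).

(* The conjugate g J g^* of J by g = (1 + tX)(1 - tX)^-1, with its
   denominator det(1 - tX) det(1 + tX) cleared. *)
Definition cayley_num : 'M[{poly C}]_n :=
  pencil X *m \adj (pencil (- X)) *m map_mx polyC J *m \adj (pencil X) *m pencil (- X).

Lemma horner_cayley_num t : ev t cayley_num =
  (1%:M + t *: X) *m \adj (1%:M - t *: X) *m J
    *m \adj (1%:M + t *: X) *m (1%:M - t *: X).
Proof. by rewrite !map_mxM !map_mx_adj !horner_pencil horner_polyC_mx scalerN. Qed.

Lemma horner0_cayley_num : ev 0 cayley_num = J.
Proof. by rewrite horner_cayley_num scale0r subr0 addr0 adj1 !mulmx1 mul1mx. Qed.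

Lemma coef1_cayley_num : exists c, coef1mx cayley_num = 2%:R *: commmx X J + c *: J.
Proof.
exists ((\det (pencil (- X)))`_1 + (\det (pencil X))`_1).
rewrite !coef1_mulmx !map_mxM !map_mx_adj !horner0_pencil !coef1_adj ?horner0_pencil //.
rewrite !coef1_pencil adj1 horner_polyC_mx.
have -> : coef1mx (map_mx polyC J) = 0 by apply/matrixP => a b; rewrite !mxE /= coefC.
rewrite ?mul1mx ?mulmx1 ?mulmx0 ?mul0mx ?add0r ?addr0 /commmx.
rewrite !(mulmxN, mulNmx, mulmxBr, mulmxBl, mulmxDl, mulmxDr).
rewrite !(mul_scalar_mx, mul_mx_scalar).
move: (X *m J) (J *m X) J => XJ JX J'.
by apply/matrixP => a b; rewrite !mxE; ring.
Qed.

End CayleyNumerator.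

Section CayleyNumeratorBlocks.
Variables (C : comNzRingType) (k : nat) (ns : 'I_k -> nat).
Local Notation N := (\sum_(i < k) ns i)%N.
Local Notation ev t := (map_mx (horner_eval t)).
Variables (X J : 'M[C]_N).
Hypothesis Jd : blockdiag_mx J.
Local Notation K := (map_mx (drop_poly 1) (cayley_num X J)).

Lemma submxblock_drop1 (M : 'M[{poly C}]_N) i j :
  submxblock (ev 0 M) i j = 0 ->
  submxblock M i j = 'X *: submxblock (map_mx (drop_poly 1) M) i j.
Proof.
move=> /matrixP M0; apply/matrixP => a b; move: (M0 a b); rewrite !mxE /=.
rewrite horner_evalE horner_coef0 => p0.
by apply/polyP => -[|e]; rewrite coefXM coef_drop_poly ?addn1.
Qed.

Lemma cayley_num_offdiag i j :
  i != j -> submxblock (cayley_num X J) i j = 'X *: submxblock K i j.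
Proof. by move=> ij; rewrite submxblock_drop1 // horner0_cayley_num Jd. Qed.

Lemma horner_cayley_num_offdiag t i j : i != j ->
  submxblock (ev t (cayley_num X J)) i j = t *: submxblock (ev t K) i j.
Proof.
move=> ij; rewrite submxblock_map cayley_num_offdiag //.
by rewrite horner_scaleX_mx -submxblock_map.
Qed.

Lemma horner0_cayley_drop_offdiag i j : i != j ->
  submxblock (ev 0 K) i j = 2%:R *: submxblock (commmx X J) i j.
Proof.
move=> ij; have [c] := coef1_cayley_num X J.
move=> /(congr1 (fun A => submxblock A i j)); rewrite submxblockD !submxblockZ Jd //.
rewrite scaler0 addr0 => <-; apply/matrixP => a b.
by rewrite !mxE /= horner_evalE horner_coef0 coef_drop_poly.
Qed.

End CayleyNumeratorBlocks.

Section CayleyTransform.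
Variables (C : numClosedFieldType) (n : nat) (X : 'M[C]_n) (t : C).
Hypotheses (HX : skew_hermitian X) (tr : t \is Num.real).
Local Notation a := (1%:M - t *: X).
Local Notation b := (1%:M + t *: X).
Hypothesis da : \det a != 0.

Definition cayley : 'M[C]_n := b *m invmx a.

Lemma ctmx_1subZ : ctmx a = b.
Proof.
apply/matrixP => x y; have /matrixP/(_ x y) := HX; rewrite !mxE => HXyx.
by rewrite rmorphB rmorphM /= (conj_Creal tr) HXyx mulrN opprK rmorph_nat eq_sym.
Qed.

Lemma unitmx_1subZ : a \in unitmx.
Proof. by rewrite unitmxE unitfE. Qed.

Lemma unitmx_1addZ : b \in unitmx.
Proof.
by rewrite unitmxE unitfE -ctmx_1subZ /ctmx det_map_mx det_tr conjC_eq0.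
Qed.

Lemma ctmx_cayley : ctmx cayley = invmx b *m a.
Proof.
by rewrite ctmxM /ctmx trmx_inv map_invmx -/(ctmx a) ctmx_1subZ -/(ctmx b)
  -ctmx_1subZ ctmxK.
Qed.

Lemma cayleyC : cayley = invmx a *m b.
Proof.
have ab : a *m b = b *m a.
  apply: comm_mxD; first exact: comm_mx1.
  exact/comm_mx_sym/comm_mxB/comm_mx_refl/comm_mx1.
rewrite /cayley -{1}(mulKmx unitmx_1subZ b) ab.
by rewrite -mulmxA mulmxK ?unitmx_1subZ.
Qed.

Lemma cayley_unitary : unitary_mx cayley.
Proof.
rewrite /unitary_mx ctmx_cayley cayleyC -mulmxA (mulmxA b) mulmxV ?unitmx_1addZ //.
by rewrite mul1mx mulVmx ?unitmx_1subZ.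
Qed.

Lemma cayley_conj (J : 'M[C]_n) : exists c : C,
  [/\ c \is Num.real, c != 0 &
     cayley *m J *m ctmx cayley = c *: map_mx (horner_eval t) (cayley_num X J)].
Proof.
have db : \det b = (\det a)^* by rewrite -ctmx_1subZ /ctmx det_map_mx det_tr.
exists (\det a * \det b)^-1; split.
- by rewrite rpredV db -normCK rpredX ?normr_real.
- by rewrite invr_eq0 mulf_neq0 // db conjC_eq0.
rewrite horner_cayley_num ctmx_cayley /cayley /invmx unitmx_1subZ unitmx_1addZ.
by rewrite invfM -!scalemxAl -!scalemxAr -!scalemxAl scalerA mulrC !mulmxA.
Qed.

End CayleyTransform.

Lemma conj_mulmx_stab (C : numClosedFieldType) n (l o h J : 'M[C]_n) :
  unitary_mx h -> h *m J = J *m h ->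
  l *m o *m h *m J *m ctmx (l *m o *m h) = l *m (o *m J *m ctmx o) *m ctmx l.
Proof.
move=> hu hJ; rewrite !ctmxM -!mulmxA (mulmxA h) hJ -(mulmxA J) (mulmxA h) hu.
by rewrite mul1mx.
Qed.

Theorem lemma6p3 (R : realType) (k : nat) (ns : 'I_k -> nat)
  (ns_pos : forall i, (0 < ns i)%N)
  (Js : forall i : 'I_k, 'M[R]_(ns i))
  (X : 'M[R[i]]_(\sum_(i < k) ns i))
  (HX : skew_hermitian X)
  (i0 : 'I_k) (s : seq 'I_k)
  (Hl : (0 < size s)%N)
  (Hpath : path (fun a b : 'I_k => a != b) i0 (rcons s i0))
  (Hnr : ~~ (char_poly
              (Acyc (commmx X (map_mx (real_complex R) (\mxdiag_(i < k) Js i))) i0 s)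
              \is a polyOver Num.real)) :
  ~ (forall g : 'M[R[i]]_(\sum_(i < k) ns i), unitary_mx g ->
       exists l o h : 'M[R[i]]_(\sum_(i < k) ns i),
         [/\ (unitary_mx l /\ forall i j : 'I_k, i != j -> submxblock l i j = 0),
             (unitary_mx o /\ o \is a mxOver Num.real),
             (unitary_mx h /\
                h *m map_mx (real_complex R) (\mxdiag_(i < k) Js i)
                = map_mx (real_complex R) (\mxdiag_(i < k) Js i) *m h)
           & g = l *m o *m h]).
Proof.
move=> surj; move/negP: Hnr; apply.
set J := map_mx _ _.
have Jd : blockdiag_mx J by apply/blockdiag_map_mx/blockdiag_mxdiag.
have Jr : J \is a mxOver Num.real.
  by apply/mxOverP => a b; rewrite mxE; apply/complex_realP; eexists.
set K := map_mx (drop_poly 1) (cayley_num X J).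
rewrite -(char_poly_Acyc_scale_real (c := 2%:R) (P := map_mx (horner_eval 0) K))
  ?realn ?pnatr_eq0 //; last exact: horner0_cayley_drop_offdiag.
rewrite -horner_char_poly_Acyc_with ?real0 //.
apply: (polyOver_real_horner0 (q := 'X * \det (pencil (- X)))) => [|m].
  by rewrite mulf_neq0 ?polyX_eq0 ?det_pencil_neq0.
set t : R[i] := m%:R; have tr : t \is Num.real by apply: realn.
rewrite hornerM hornerX horner_det_pencil scalerN mulf_eq0 negb_or => /andP[t0 da].
rewrite horner_char_poly_Acyc_with //.
have [c [cr c0 gJg]] := cayley_conj HX tr da J.
set g := cayley X t.
rewrite -(char_poly_Acyc_scale_real (c := c * t) (P := g *m J *m ctmx g))
  ?rpredM ?mulf_neq0 //; last first.
  by move=> a b ab; rewrite gJg submxblockZ horner_cayley_num_offdiag // scalerA.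
have [l [o [h [[lu ld] [ou or] [hu hJ] ->]]]] := surj g (cayley_unitary HX tr da).
rewrite conj_mulmx_stab // char_poly_Acyc_conj_real //.
by rewrite mxOverM ?mxOverM ?ctmx_real.
Qed.
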